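(* Let $A$ be a formula in the language of $\mathbf{GL}$ whose only propositional variable (if any) is $p$. If $\mathbf{GL} \vdash A$, then $\mathbf{IL} \vdash A^{\dagger}$.
   Context: $\mathbf{GL}$ (Gödel–Löb provability logic) is the normal modal logic in one modality $\Box$ axiomatized over classical propositional logic by all instances of $\Box(A\to B)\to(\Box A\to\Box B)$ and $\Box(\Box A\to A)\to\Box A$, with rules Modus Ponens and Necessitation. $\mathbf{IL}$ is the logic in the language with a unary modality $\Box$ and a binary modality $\rhd$, with rules Modus Ponens and Necessitation, whose axioms are all propositional tautologies, all axioms of $\mathbf{GL}$, and all instances of: (J1) $\Box(A\to B)\to A\rhd B$; (J2) $(A\rhd B)\wedge(B\rhd C)\to A\rhd C$; (J3) $(A\rhd C)\wedge(B\rhd C)\to (A\vee B)\rhd C$; (J4) $A\rhd B\to(\Diamond A\to\Diamond B)$; (J5) $\Diamond A\rhd A$. Here $\Diamond\varphi$ abbreviates $\neg\Box\neg\varphi$, $\top$ abbreviates $\neg\bot$, and formulas are built from $\bot$, $\to$ (other Boolean connectives being abbreviations), $\Box$ and (in $\mathbf{IL}$) $\rhd$. The translation $\dagger$ from $\mathbf{GL}$-formulas in the single variable $p$ to variable-free $\mathbf{IL}$-formulas is defined by: $\bot^{\dagger}=\bot$; $p^{\dagger}=\Diamond\Diamond\top\to(\top\rhd\Diamond\top)$; $(A\to B)^{\dagger}=A^{\dagger}\to B^{\dagger}$; $(\Box A)^{\dagger}=\Box(\Diamond\Diamond\top\to A^{\dagger})$. *)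

Inductive fm : Type :=
| Var : nat -> fm
| Bot : fm
| Imp : fm -> fm -> fm
| Box : fm -> fm
| Rhd : fm -> fm -> fm.

Definition Neg (A : fm) : fm := Imp A Bot.
Definition Top : fm := Neg Bot.
Definition Or (A B : fm) : fm := Imp (Neg A) B.
Definition And (A B : fm) : fm := Neg (Imp A (Neg B)).
Definition Dia (A : fm) : fm := Neg (Box (Neg A)).

(* A boolean valuation respecting the Boolean connectives; modal formulas
   and variables are treated as atoms. *)
Definition bool_hom (v : fm -> bool) : Prop :=
  v Bot = false /\
  forall A B, v (Imp A B) = implb (v A) (v B).

Definition taut (A : fm) : Prop := forall v, bool_hom v -> v A = true.

Fixpoint rhd_free (A : fm) : Prop :=
  match A with
  | Var _ | Bot => True
  | Imp B C => rhd_free B /\ rhd_free C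
  | Box B => rhd_free B
  | Rhd _ _ => False
  end.

Inductive GL_prv : fm -> Prop :=
| GL_taut : forall A, rhd_free A -> taut A -> GL_prv A
| GL_K : forall A B, rhd_free A -> rhd_free B ->
    GL_prv (Imp (Box (Imp A B)) (Imp (Box A) (Box B)))
| GL_L : forall A, rhd_free A ->
    GL_prv (Imp (Box (Imp (Box A) A)) (Box A))
| GL_MP : forall A B, GL_prv (Imp A B) -> GL_prv A -> GL_prv B
| GL_Nec : forall A, GL_prv A -> GL_prv (Box A).

Inductive IL_prv : fm -> Prop :=
| IL_taut : forall A, taut A -> IL_prv A
| IL_K : forall A B, IL_prv (Imp (Box (Imp A B)) (Imp (Box A) (Box B)))
| IL_L : forall A, IL_prv (Imp (Box (Imp (Box A) A)) (Box A))
| IL_J1 : forall A B, IL_prv (Imp (Box (Imp A B)) (Rhd A B))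
| IL_J2 : forall A B C,
    IL_prv (Imp (And (Rhd A B) (Rhd B C)) (Rhd A C))
| IL_J3 : forall A B C,
    IL_prv (Imp (And (Rhd A C) (Rhd B C)) (Rhd (Or A B) C))
| IL_J4 : forall A B, IL_prv (Imp (Rhd A B) (Imp (Dia A) (Dia B)))
| IL_J5 : forall A, IL_prv (Rhd (Dia A) A)
| IL_MP : forall A B, IL_prv (Imp A B) -> IL_prv A -> IL_prv B
| IL_Nec : forall A, IL_prv A -> IL_prv (Box A).

Definition p : fm := Var 0.

Fixpoint only_p (A : fm) : Prop :=
  match A with
  | Var n => n = 0
  | Bot => True
  | Imp B C => only_p B /\ only_p C
  | Box B => only_p B
  | Rhd B C => only_p B /\ only_p C
  end.

(* The translation dagger (defined on all formulas; on Rhd it is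
   irrelevant for GL formulas and is set homomorphically). *)
Fixpoint dagger (A : fm) : fm :=
  match A with
  | Var _ => Imp (Dia (Dia Top)) (Rhd Top (Dia Top))
  | Bot => Bot
  | Imp B C => Imp (dagger B) (dagger C)
  | Box B => Box (Imp (Dia (Dia Top)) (dagger B))
  | Rhd B C => Rhd (dagger B) (dagger C)
  end.


(* The translation dagger is a relativization: it interprets the variable p
   by a fixed formula and Box by the relativized modality Box (D -> _), with
   D := Dia Dia Top.  We prove the theorem for every such relativization,
   i.e. for an arbitrary relativizer D and an arbitrary interpretation s of
   the variables, by induction on GL-derivations:
   - Boolean-homomorphic maps on formulas preserve tautologies, so the
     tautology axioms of GL translate into tautologies;
   - the relativized modality Box (D -> _) satisfies in IL the K axiom, the
     Löb axiom and the necessitation rule, which covers the remaining axioms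
     and rules of GL. *)

Ltac solve_taut :=
  let v := fresh "v" in let Hbot := fresh "Hbot" in let Himp := fresh "Himp" in
  intros v [Hbot Himp]; repeat rewrite Himp; rewrite ?Hbot;
  repeat match goal with |- context [v ?X] => destruct (v X) end; reflexivity.

Lemma IL_taut_mp A B : IL_prv A -> taut (Imp A B) -> IL_prv B.
Proof. intros HA HAB. apply (IL_MP A); [apply IL_taut |]; assumption. Qed.

Lemma IL_taut_mp2 A B C :
  IL_prv A -> IL_prv B -> taut (Imp A (Imp B C)) -> IL_prv C.
Proof.
  intros HA HB HABC. apply (IL_MP B); [| exact HB].
  apply (IL_taut_mp A); assumption.
Qed.

Lemma IL_box_mono A B : IL_prv (Imp A B) -> IL_prv (Imp (Box A) (Box B)).
Proof. intros H. apply (IL_MP (Box (Imp A B))); [apply IL_K | apply IL_Nec, H]. Qed.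

Definition rbox (D A : fm) : fm := Box (Imp D A).

Lemma rbox_nec D A : IL_prv A -> IL_prv (rbox D A).
Proof.
  intros H. apply IL_Nec. apply (IL_taut_mp A); [exact H | solve_taut].
Qed.

Lemma rbox_K D A B :
  IL_prv (Imp (rbox D (Imp A B)) (Imp (rbox D A) (rbox D B))).
Proof.
  unfold rbox.
  assert (Hdistr : IL_prv (Imp (Box (Imp D (Imp A B)))
                               (Box (Imp (Imp D A) (Imp D B))))).
  { apply IL_box_mono, IL_taut. solve_taut. }
  apply (IL_taut_mp2 _ _ _ Hdistr (IL_K (Imp D A) (Imp D B))). solve_taut.
Qed.

(* The Löb axiom for the relativized modality: it is Löb's axiom for the
   formula D -> A, after moving D inside. *)
Lemma rbox_L D A :
  IL_prv (Imp (rbox D (Imp (rbox D A) A)) (rbox D A)).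
Proof.
  unfold rbox.
  assert (Hshift : IL_prv (Imp (Box (Imp D (Imp (Box (Imp D A)) A)))
                               (Box (Imp (Box (Imp D A)) (Imp D A))))).
  { apply IL_box_mono, IL_taut. solve_taut. }
  apply (IL_taut_mp2 _ _ _ Hshift (IL_L (Imp D A))). solve_taut.
Qed.

(* A map on formulas commuting with Bot and Imp preserves tautologies:
   a valuation of the image pulls back to a valuation of the source. *)
Lemma taut_hom (f : fm -> fm) A :
  f Bot = Bot -> (forall B C, f (Imp B C) = Imp (f B) (f C)) ->
  taut A -> taut (f A).
Proof.
  intros fBot fImp HA v [Hbot Himp].
  apply (HA (fun X => v (f X))). split.
  - simpl. rewrite fBot. exact Hbot.
  - intros B C. simpl. rewrite fImp. apply Himp.
Qed.

Fixpoint rel_tr (D : fm) (s : nat -> fm) (A : fm) : fm :=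
  match A with
  | Var n => s n
  | Bot => Bot
  | Imp B C => Imp (rel_tr D s B) (rel_tr D s C)
  | Box B => rbox D (rel_tr D s B)
  | Rhd B C => Rhd (rel_tr D s B) (rel_tr D s C)
  end.

Lemma GL_rel_tr D s A : GL_prv A -> IL_prv (rel_tr D s A).
Proof.
  induction 1 as [A _ HA | A B _ _ | A _ | A B _ IHAB _ IHA | A _ IHA]; simpl.
  - apply IL_taut, taut_hom; [reflexivity | reflexivity | exact HA].
  - apply rbox_K.
  - apply rbox_L.
  - apply (IL_MP (rel_tr D s A)); [exact IHAB | exact IHA].
  - apply rbox_nec, IHA.
Qed.

Lemma dagger_rel_tr A :
  dagger A = rel_tr (Dia (Dia Top))
               (fun _ => Imp (Dia (Dia Top)) (Rhd Top (Dia Top))) A.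
Proof. induction A; simpl; unfold rbox; congruence. Qed.

Theorem mainTheorem1 (A : fm) :
  rhd_free A -> only_p A -> GL_prv A -> IL_prv (dagger A).
Proof.
  intros _ _ HA. rewrite dagger_rel_tr. apply GL_rel_tr, HA.
Qed.
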